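(* Let $\mathcal{A}$ be an integral domain with field of fractions $\mathcal{F}$, let $\mathcal{Z}\subsetneq\mathcal{A}$ be a prime ideal, and let $\mathcal{P}=\{n/d\mid n\in\mathcal{A},\ d\in\mathcal{A}\setminus\mathcal{Z}\}$ be the set of causal transfer functions. Suppose there exist $a,b,a',b'\in\mathcal{A}$ with $a'\neq 0$ such that: (i) $ab=a'b'$; (ii) the ratio $a/a'$ belongs to $\mathcal{P}$ (i.e. is a causal transfer function) and does not have a coprime factorization over $\mathcal{A}$; (iii) the pair $(a,b)$ is coprime over $\mathcal{A}$, i.e. there exist $x,y\in\mathcal{A}$ with $xa+yb=1$. Then there exists a causal stabilizable plant $P$ which has neither a right-coprime factorization nor a left-coprime factorization over $\mathcal{A}$.
   Context: Setting: $\mathcal{A}$ is the ring of stable causal transfer functions, $\mathcal{F}$ its field of fractions (all possible transfer functions), and causality is defined via the prime ideal $\mathcal{Z}$: a plant (a matrix) is causal if all its entries lie in $\mathcal{P}$. For a plant $P$ (an $n\times m$ matrix over $\mathcal{F}$) and a controller $C$ (an $m\times n$ matrix over $\mathcal{F}$) with $\det(I_n+PC)\neq0$, the closed-loop matrix is $H(P,C)=\begin{pmatrix}(I_n+PC)^{-1} & -P(I_m+CP)^{-1}\\ C(I_n+PC)^{-1} & (I_m+CP)^{-1}\end{pmatrix}$; the closed loop is stable if $H(P,C)$ has all entries in $\mathcal{A}$, and $P$ is stabilizable if some such $C$ exists. A right-coprime factorization of $P$ over $\mathcal{A}$ is $P=ND^{-1}$ with $N,D$ matrices over $\mathcal{A}$,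 $\det D\neq0$, such that $YN+XD=I$ for some matrices $X,Y$ over $\mathcal{A}$; a left-coprime factorization is $P=\tilde D^{-1}\tilde N$ with $\tilde N,\tilde D$ over $\mathcal{A}$, $\det\tilde D\neq0$, and $\tilde N\tilde Y+\tilde D\tilde X=I$ for some $\tilde X,\tilde Y$ over $\mathcal{A}$. For a scalar $p\in\mathcal{F}$ a coprime factorization is $p=n/d$ with $n,d\in\mathcal{A}$, $d\neq0$, and $xn+yd=1$ for some $x,y\in\mathcal{A}$. *)

From HB Require Import structures.
From mathcomp Require Import all_boot all_order all_algebra fraction.
Set Implicit Arguments. Unset Strict Implicit. Unset Printing Implicit Defensive.
Import GRing.Theory.
Local Open Scope ring_scope.

Definition emb (A : idomainType) : A -> {fraction A} := @FracField.tofrac A.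

Definition prime_ideal (A : idomainType) (Z : A -> Prop) : Prop :=
  [/\ Z 0,
      (forall x y, Z x -> Z y -> Z (x + y)),
      (forall r x, Z x -> Z (r * x)),
      ~ Z 1 &
      (forall x y, Z (x * y) -> Z x \/ Z y)].

Definition causal (A : idomainType) (Z : A -> Prop) (p : {fraction A}) : Prop :=
  exists n d : A, ~ Z d /\ p = emb n / emb d.

Definition inA (A : idomainType) (p : {fraction A}) : Prop :=
  exists a : A, p = emb a.

Definition mx_causal (A : idomainType) (Z : A -> Prop) n m
  (P : 'M[{fraction A}]_(n, m)) : Prop :=
  forall i j, causal Z (P i j).

Definition mx_inA (A : idomainType) n m (M : 'M[{fraction A}]_(n, m)) : Prop :=
  forall i j, inA (M i j).

Definition closed_loop (A : idomainType) n m
  (P : 'M[{fraction A}]_(n, m)) (C : 'M[{fraction A}]_(m, n))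
  : 'M[{fraction A}]_(n + m, n + m) :=
  block_mx (invmx (1%:M + P *m C))   (- (P *m invmx (1%:M + C *m P)))
           (C *m invmx (1%:M + P *m C)) (invmx (1%:M + C *m P)).

Definition stabilizable (A : idomainType) n m (P : 'M[{fraction A}]_(n, m)) : Prop :=
  exists C : 'M[{fraction A}]_(m, n),
    \det (1%:M + P *m C) != 0 /\ mx_inA (closed_loop P C).

Definition has_rcf (A : idomainType) n m (P : 'M[{fraction A}]_(n, m)) : Prop :=
  exists (N : 'M[A]_(n, m)) (D : 'M[A]_m),
    [/\ \det D != 0,
        P = map_mx (@emb A) N *m invmx (map_mx (@emb A) D) &
        exists (X : 'M[A]_m) (Y : 'M[A]_(m, n)), Y *m N + X *m D = 1%:M].

Definition has_lcf (A : idomainType) n m (P : 'M[{fraction A}]_(n, m)) : Prop :=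
  exists (Nt : 'M[A]_(n, m)) (Dt : 'M[A]_n),
    [/\ \det Dt != 0,
        P = invmx (map_mx (@emb A) Dt) *m map_mx (@emb A) Nt &
        exists (Xt : 'M[A]_n) (Yt : 'M[A]_(m, n)), Nt *m Yt + Dt *m Xt = 1%:M].

Definition has_cf (A : idomainType) (p : {fraction A}) : Prop :=
  exists n d : A, [/\ d != 0, p = emb n / emb d &
    exists x y : A, x * n + y * d = 1].

From HB Require Import structures.
From mathcomp Require Import all_boot all_order all_algebra fraction.
Import GRing.Theory.
Local Open Scope ring_scope.

(* Take the scalar plant p = a/a' as a 1x1 matrix. A right or left coprime
   factorization of a 1x1 matrix is a scalar coprime factorization, which p
   lacks by (ii). The controller c = x a' / (y b) stabilizes p: by the Bezout
   identity x a + y b = 1 the return difference is 1 + p c = 1 / (y b), so the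
   closed-loop entries are y b, - y b', x a' and y b (using a b = a' b'), all in
   A. Here y b <> 0, since otherwise x a = 1 would factor p coprimely.
   Causality of the plant is just (ii). *)

Lemma scalar_mx11_inj (R : nzRingType) : injective (fun a : R => a%:M : 'M_1).
Proof. by move=> a b /matrixP/(_ 0 0); rewrite !mxE eqxx !mulr1n. Qed.

Lemma has_rcf_scalar (A : idomainType) (p : {fraction A}) :
  has_rcf (p%:M : 'M_1) -> has_cf p.
Proof.
case=> N [D [detD eP [X [Y eXY]]]].
rewrite [N]mx11_scalar [D]mx11_scalar in detD eP eXY.
rewrite [X]mx11_scalar [Y]mx11_scalar -!scalar_mxM -raddfD /= in eXY.
rewrite !map_scalar_mx invmx_scalar -scalar_mxM in eP.
exists (N 0 0), (D 0 0); split.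
- by rewrite det_scalar1 in detD.
- exact: scalar_mx11_inj eP.
- by exists (Y 0 0), (X 0 0); apply: scalar_mx11_inj.
Qed.

Lemma has_lcf_scalar (A : idomainType) (p : {fraction A}) :
  has_lcf (p%:M : 'M_1) -> has_cf p.
Proof.
case=> N [D [detD eP [X [Y eXY]]]].
rewrite [N]mx11_scalar [D]mx11_scalar in detD eP eXY.
rewrite [X]mx11_scalar [Y]mx11_scalar -!scalar_mxM -raddfD /= in eXY.
rewrite !map_scalar_mx invmx_scalar -scalar_mxM in eP.
exists (N 0 0), (D 0 0); split.
- by rewrite det_scalar1 in detD.
- by rewrite mulrC; apply: scalar_mx11_inj eP.
- by exists (Y 0 0), (X 0 0); rewrite mulrC [X 0 0 * _]mulrC; apply: scalar_mx11_inj.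
Qed.

Lemma has_cf_frac (A : idomainType) (a a' x y : A) :
  a' != 0 -> x * a + y * a' = 1 -> has_cf (emb a / emb a').
Proof. by move=> a'0 exy; exists a, a'; split => //; exists x, y. Qed.

Lemma inA_opp (A : idomainType) (u : {fraction A}) : inA u -> inA (- u).
Proof. by case=> v ->; exists (- v); rewrite /emb rmorphN. Qed.

Lemma mx_inA_scalar (A : idomainType) n (u : {fraction A}) :
  inA u -> mx_inA (u%:M : 'M_n).
Proof.
case=> v -> i j; rewrite mxE.
by case: eqP => _; [exists v | exists 0; rewrite /emb tofrac0].
Qed.

Lemma mx_inA_block (A : idomainType) m1 m2 n1 n2
    (Mul : 'M[{fraction A}]_(m1, n1)) (Mur : 'M_(m1, n2))
    (Mdl : 'M_(m2, n1)) (Mdr : 'M_(m2, n2)) :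
  mx_inA Mul -> mx_inA Mur -> mx_inA Mdl -> mx_inA Mdr ->
  mx_inA (block_mx Mul Mur Mdl Mdr).
Proof.
move=> ul ur dl dr i j.
case: (split_ordP i) => {}i ->; case: (split_ordP j) => {}j ->;
  by rewrite ?block_mxEul ?block_mxEur ?block_mxEdl ?block_mxEdr.
Qed.

Lemma closed_loop_scalar (A : idomainType) n (p c : {fraction A}) :
  closed_loop (p%:M : 'M_n) (c%:M : 'M_n) =
  block_mx (1 + p * c)^-1%:M (- (p / (1 + p * c)))%:M
           (c / (1 + p * c))%:M (1 + p * c)^-1%:M.
Proof.
rewrite /closed_loop -!scalar_mxM [c * p]mulrC -raddfD /= invmx_scalar.
by rewrite -!scalar_mxM -raddfN.
Qed.

Lemma stabilizable_scalar (A : idomainType) n (p c : {fraction A}) :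
  1 + p * c != 0 ->
  inA (1 + p * c)^-1 -> inA (p / (1 + p * c)) -> inA (c / (1 + p * c)) ->
  stabilizable (p%:M : 'M_n).
Proof.
move=> pc0 S PS CS; exists c%:M; split.
  by rewrite -scalar_mxM -raddfD /= det_scalar expf_neq0.
rewrite closed_loop_scalar.
by apply: mx_inA_block; apply: mx_inA_scalar => //; apply: inA_opp.
Qed.

Lemma stabilizable_frac (A : idomainType) (a b a' b' x y : A) :
  a' != 0 -> y * b != 0 -> a * b = a' * b' -> x * a + y * b = 1 ->
  stabilizable ((emb a / emb a')%:M : 'M_1).
Proof.
move=> a'0 yb0 eab exy.
set p := emb a / emb a'; set c := emb (x * a') / emb (y * b).
have ea' : emb a' != 0 by rewrite tofrac_eq0.
have eyb : emb (y * b) != 0 by rewrite tofrac_eq0.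
have epc : p * c = emb (x * a) / emb (y * b).
  by rewrite /p /c /emb !rmorphM /= mulrACA !mulrA mulfK // [tofrac a * _]mulrC.
have sensitivity : (1 + p * c)^-1 = emb (y * b).
  by rewrite epc -[1](divff eyb) -mulrDl /emb -rmorphD /= addrC exy rmorph1 div1r invrK.
apply: (@stabilizable_scalar _ _ _ c); rewrite ?sensitivity.
- by rewrite -invr_eq0 sensitivity.
- by exists (y * b).
- exists (y * b'); apply: (mulIf ea').
  by rewrite mulrAC mulfVK // -!rmorphM /= mulrCA eab mulrCA mulrC.
- by exists (x * a'); rewrite /c divfK.
Qed.

Theorem proposition1 (A : idomainType) (Z : A -> Prop) (a b a' b' : A) :
  prime_ideal Z ->
  a' != 0 ->
  a * b = a' * b' ->
  causal Z (emb a / emb a') ->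
  ~ has_cf (emb a / emb a') ->
  (exists x y : A, x * a + y * b = 1) ->
  exists (n m : nat) (P : 'M[{fraction A}]_(n, m)),
    [/\ mx_causal Z P, stabilizable P, ~ has_rcf P & ~ has_lcf P].
Proof.
move=> _ a'0 eab causal_p no_cf [x [y exy]].
have yb0 : y * b != 0.
  apply: contra_notN no_cf => /eqP yb0.
  by apply: (@has_cf_frac _ _ _ x 0) => //; rewrite mul0r addr0 -exy yb0 addr0.
exists 1%N, 1%N, (emb a / emb a')%:M; split.
- by move=> i j; rewrite !ord1 mxE eqxx mulr1n.
- exact: stabilizable_frac a'0 yb0 eab exy.
- by move/has_rcf_scalar.
- by move/has_lcf_scalar.
Qed.
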